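(* Let $Q$ be a commutative loop possessing a subgroup of index $2$. The following are equivalent: (i) $Q$ is an A-loop and $[Q:N_\mu(Q)]\le 2$. (ii) $Q\cong G(f)$, where $G$ is a commutative group of index $2$ and $f$ is a permutation of $G$ satisfying, for all $x,y\in G$: $f(xy)=f(x)f(y)f(1)^{-1}$; $f(x^2)=x^2f(1)$; and $f^2(x)^2f(x)^{-2}=f^2(1)$ (where $f^2=f\circ f$). (iii) $Q\cong G(f)$, where $G$ is a commutative group of index $2$ and $f$ is a permutation of $G$ satisfying $f(xy)=f(x)f(y)f(1)^{-1}$ and $f(x^2)=x^2f(1)$ for all $x,y\in G$, and $f(f(1))=f(1)^2$. (iv) $Q\cong G(f)$, where $G$ is a commutative group of index $2$, and $f(x)=g(x)t$ for all $x\in G$, with $g\in\mathrm{Aut}(G)$ satisfying $g(x^2)=x^2$ for all $x\in G$ and $t\in G$ a fixed point of $g$.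
   Context: A loop is a set with a binary operation and a neutral element $1$ in which all left translations $L_x$ and right translations $R_x$ are bijections. Its inner mapping group is the permutation group generated by $L_{x,y}=L_{yx}^{-1}L_yL_x$, $R_{x,y}=R_{xy}^{-1}R_yR_x$, $T_x=L_x^{-1}R_x$; a loop is an A-loop (automorphic loop) if every inner mapping is an automorphism. The middle nucleus is $N_\mu(Q)=\{y:(xy)z=x(yz)\ \forall x,z\}$. Construction $G(f)$: for a commutative group $G$ (written multiplicatively) and a bijection $f:G\to G$, let $\overline{G}$ be a disjoint copy of $G$, and let $G(f)$ be $G\cup\overline{G}$ with multiplication $x*y=xy$, $x*\overline{y}=\overline{xy}$, $\overline{x}*y=\overline{xy}$, $\overline{x}*\overline{y}=f(xy)$ for $x,y\in G$. *)

(* loops are arbitrary (possibly infinite) types with an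
   explicit binary operation; commutative groups are MathComp zmodTypes
   (written additively). *)
From HB Require Import structures.
From mathcomp Require Import all_boot all_algebra.
Set Implicit Arguments. Unset Strict Implicit. Unset Printing Implicit Defensive.
Import GRing.Theory.
Local Open Scope ring_scope.

Section Loops.
Variables (Q : Type) (mul : Q -> Q -> Q) (e : Q).

Definition is_loop : Prop :=
  [/\ forall x, mul e x = x /\ mul x e = x,
      forall x, bijective (mul x) &
      forall x, bijective (fun y => mul y x)].

Definition loop_commutative : Prop := forall x y, mul x y = mul y x.

(* generators of the inner mapping group, written out pointwise:
   L_{x,y} = L_{yx}^{-1} L_y L_x,  R_{x,y} = R_{xy}^{-1} R_y R_x,
   T_x = L_x^{-1} R_x  (maps composed right to left). *)
Inductive inner_mapping : (Q -> Q) -> Prop :=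
  | Inn_id : inner_mapping id
  | Inn_L (x y : Q) (f : Q -> Q) :
      (forall z, mul (mul y x) (f z) = mul y (mul x z)) -> inner_mapping f
  | Inn_R (x y : Q) (f : Q -> Q) :
      (forall z, mul (f z) (mul x y) = mul (mul z x) y) -> inner_mapping f
  | Inn_T (x : Q) (f : Q -> Q) :
      (forall z, mul x (f z) = mul z x) -> inner_mapping f
  | Inn_comp (f g : Q -> Q) :
      inner_mapping f -> inner_mapping g -> inner_mapping (f \o g)
  | Inn_inv (f g : Q -> Q) :
      inner_mapping f -> cancel f g -> cancel g f -> inner_mapping g
  | Inn_ext (f g : Q -> Q) :
      inner_mapping f -> f =1 g -> inner_mapping g.

Definition loop_automorphism (f : Q -> Q) : Prop :=
  bijective f /\ forall x y, f (mul x y) = mul (f x) (f y).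

Definition A_loop : Prop :=
  forall f, inner_mapping f -> loop_automorphism f.

Definition middle_nucleus (y : Q) : Prop :=
  forall x z, mul (mul x y) z = mul x (mul y z).

Definition is_subgroup (H : Q -> Prop) : Prop :=
  [/\ H e,
      forall a b, H a -> H b -> H (mul a b),
      forall a b x, H a -> H b -> mul a x = b -> H x,
      forall a b x, H a -> H b -> mul x a = b -> H x &
      forall a b c, H a -> H b -> H c -> mul (mul a b) c = mul a (mul b c)].

Definition index_le2 (H : Q -> Prop) : Prop :=
  exists c, forall x, H x \/ exists2 h, H h & x = mul c h.

Definition index2 (H : Q -> Prop) : Prop :=
  (exists x, ~ H x) /\ index_le2 H.

End Loops.

(* the construction G(f): inl x = x in G, inr x = \bar x *)
Definition Gf_mul (G : zmodType) (f : G -> G) (u v : G + G) : G + G :=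
  match u, v with
  | inl x, inl y => inl (x + y)
  | inl x, inr y => inr (x + y)
  | inr x, inl y => inr (x + y)
  | inr x, inr y => inl (f (x + y))
  end.

Definition loop_iso (Q1 Q2 : Type) (m1 : Q1 -> Q1 -> Q1) (m2 : Q2 -> Q2 -> Q2)
  : Prop :=
  exists phi : Q1 -> Q2, bijective phi /\ forall x y, phi (m1 x y) = m2 (phi x) (phi y).

Definition additive_aut (G : zmodType) (g : G -> G) : Prop :=
  bijective g /\ forall x y, g (x + y) = g x + g y.

From HB Require Import structures.
From mathcomp Require Import all_boot all_algebra boolp.
Set Implicit Arguments. Unset Strict Implicit. Unset Printing Implicit Defensive.
Import GRing.Theory.
Local Open Scope ring_scope.

(* Groups are written additively, so
   the neutral element 1 of G is 0 here and \bar 1 is inr 0.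

   The pivot: in a commutative loop every generator of the inner mapping group
   is the identity or a left inner mapping L_{x,y}, so Q is an A-loop iff
   every L_{x,y} is a homomorphism ("left inner automorphic"), a property
   invariant under isomorphism. *)

Definition left_inner_automorphic (Q : Type) (mul : Q -> Q -> Q) : Prop :=
  forall x y (h : Q -> Q), (forall z, mul (mul y x) (h z) = mul y (mul x z)) ->
    forall u v, h (mul u v) = mul (h u) (h v).

Lemma loop_iso_sym (Q1 Q2 : Type) (m1 : Q1 -> Q1 -> Q1) (m2 : Q2 -> Q2 -> Q2) :
  loop_iso m1 m2 -> loop_iso m2 m1.
Proof.
move=> [phi [[psi phiK psiK] phiM]]; exists psi; split; first by exists phi.
by move=> x y; apply: (can_inj phiK); rewrite phiM !psiK.
Qed.

(* L_{x,y} in Q1 is conjugate to L_{phi x, phi y} in Q2 *)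
Lemma left_inner_automorphic_iso (Q1 Q2 : Type) (m1 : Q1 -> Q1 -> Q1)
    (m2 : Q2 -> Q2 -> Q2) :
  loop_iso m1 m2 -> left_inner_automorphic m2 -> left_inner_automorphic m1.
Proof.
move=> [phi [[psi phiK psiK] phiM]] hA x y h hL u v.
pose h2 := phi \o h \o psi.
have h2L z : m2 (m2 (phi y) (phi x)) (h2 z) = m2 (phi y) (m2 (phi x) z).
  by rewrite /h2 /= -!phiM hL -{2}(psiK z) -!phiM.
apply: (can_inj phiK); rewrite !phiM.
have E w : phi (h w) = h2 (phi w) by rewrite /h2 /= phiK.
by rewrite !E phiM (hA _ _ _ h2L).
Qed.

(* isomorphisms map middle nucleus onto middle nucleus *)
Lemma nucleus_index_iso (Q1 Q2 : Type) (m1 : Q1 -> Q1 -> Q1) (m2 : Q2 -> Q2 -> Q2) :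
  loop_iso m1 m2 -> index_le2 m2 (middle_nucleus m2) ->
  index_le2 m1 (middle_nucleus m1).
Proof.
move=> [phi [[psi phiK psiK] phiM]] [c hc].
have nuc y : middle_nucleus m2 (phi y) -> middle_nucleus m1 y.
  by move=> hy x z; apply: (can_inj phiK); rewrite !phiM hy.
exists (psi c) => x; case: (hc (phi x)) => [hx|[h hh Ex]]; first by left; apply: nuc.
right; exists (psi h); first by apply: nuc; rewrite psiK.
by apply: (can_inj phiK); rewrite phiM !psiK.
Qed.

Section CommutativeLoop.
Variables (Q : Type) (mul : Q -> Q -> Q) (e : Q).
Hypotheses (hl : is_loop mul e) (hc : loop_commutative mul).
Local Notation "x * y" := (mul x y).
Local Notation nucleus := (middle_nucleus mul).

Lemma mul1q x : e * x = x. Proof. by case: hl => /(_ x) []. Qed.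
Lemma mulq1 x : x * e = x. Proof. by case: hl => /(_ x) []. Qed.
Lemma mulqI x : injective (mul x). Proof. by case: hl => _ /(_ x) /bij_inj. Qed.
Lemma mulIq x : injective (mul^~ x). Proof. by move=> y z; rewrite /= ![_ * x]hc => /mulqI. Qed.

Lemma left_inner_bijective x y h :
  (forall z, (y * x) * h z = y * (x * z)) -> bijective h.
Proof.
move=> hL; have [_ Lbij _] := hl; have [d dK Kd] := Lbij (y * x).
apply: (@eq_bij _ _ (d \o mul y \o mul x)); last by move=> z /=; rewrite -hL dK.
by apply: bij_comp; [apply: bij_comp; [exists (mul (y * x)) | apply: Lbij] | apply: Lbij].
Qed.

(* in a commutative loop every generator of the inner mapping group is an
   L_{x,y} or the identity, so A-loops are detected on left inner mappings *)
Lemma A_loopP : A_loop mul <-> left_inner_automorphic mul.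
Proof.
split=> [hA x y h hL|hLA f]; first by case: (hA h (Inn_L hL)).
elim=> {f} [|x y f hL|x y f hR|x f hT|f g _ [fb fM] _ [gb gM]
            |f g _ [fb fM] fK gK|f g _ [fb fM] fg].
- by split=> //; exists id.
- by split; [apply: left_inner_bijective hL | apply: hLA hL].
- have hL z : (y * x) * f z = y * (x * z) by rewrite [y * x]hc hc hR hc [z * x]hc.
  by split; [apply: left_inner_bijective hL | apply: hLA hL].
- have -> : f = id by apply/funext => z; apply: (@mulqI x); rewrite hT hc.
  by split=> //; exists id.
- by split=> [|u v /=]; [apply: bij_comp | rewrite gM fM].
- split=> [|u v]; first by exists f.
  by rewrite -{1}(gK u) -{1}(gK v) -fM fK.
- by split=> [|u v]; [apply: eq_bij fg | rewrite -!fg].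
Qed.

Lemma nucleus_mul a b : nucleus a -> nucleus b -> nucleus (a * b).
Proof. by move=> ha hb x z; rewrite -ha hb ha hb. Qed.

Lemma nucleus_inv a m : nucleus a -> m * a = e -> nucleus m.
Proof.
move=> ha ma x z.
have am : a * m = e by rewrite hc.
have mK w : m * (a * w) = w by rewrite -ha ma mul1q.
have Km w : a * (m * w) = w by apply: (@mulqI m); rewrite mK.
have mKr w : (w * a) * m = w by rewrite ha am mulq1.
have Kmr w : (w * m) * a = w by apply: (@mulIq m); rewrite /= mKr.
by rewrite -{1}(Km z) -ha Kmr.
Qed.

Lemma nucleus_subgroup : is_subgroup mul e nucleus.
Proof.
have nucleus_div a b y : nucleus a -> nucleus b -> a * y = b -> nucleus y.
  move=> ha hb ay; have [_ _ /(_ a) [d _ dK]] := hl.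
  have hd : nucleus (d e) by apply: nucleus_inv ha (dK e).
  have -> : y = d e * b by rewrite -ay -ha dK mul1q.
  exact: nucleus_mul.
split=> [x z|a b|a b y ha hb|a b y ha hb|a b c _ hb _].
- by rewrite mulq1 mul1q.
- exact: nucleus_mul.
- exact: nucleus_div.
- by rewrite hc; apply: nucleus_div.
- exact: hb.
Qed.

Lemma index2_coset K : is_subgroup mul e K -> index2 mul K ->
  exists c, ~ K c /\ forall x, K x \/ exists2 h, K h & x = c * h.
Proof.
move=> [_ Kmul _ _ _] [[x Kx] [c Kdec]]; exists c; split=> // Kc.
by apply: Kx; case: (Kdec x) => // -[h Kh ->]; apply: Kmul.
Qed.

Lemma nuclear_subgroup_index2 :
  (exists H, is_subgroup mul e H /\ index2 mul H) -> index_le2 mul nucleus ->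
  exists K, [/\ is_subgroup mul e K, forall y, K y -> nucleus y & index2 mul K].
Proof.
move=> [H [Hsub Hidx]] Nidx.
case: (lem (exists x, ~ nucleus x)) => [Nproper|Nall].
  by exists nucleus; split; [apply: nucleus_subgroup | | split].
by exists H; split=> // y _; apply: contrapT => Ny; apply: Nall; exists y.
Qed.
End CommutativeLoop.

Lemma inj_surj_bijective (A B : Type) (p : A -> B) :
  injective p -> (forall b, exists a, p a = b) -> bijective p.
Proof.
move=> pI /(_ _)/cid psurj; have [q pq] := all_sig psurj.
by exists q => // a; apply: pI; rewrite pq.
Qed.

(* a subgroup of a commutative loop, as an abelian group; the loop axioms
   are parameters so that the zmodType instance below can use them *)
Definition subgroup_type (Q : Type) (mul : Q -> Q -> Q) (e : Q) (K : Q -> Prop)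
  of is_loop mul e & loop_commutative mul & is_subgroup mul e K := {x : Q | K x}.

HB.instance Definition _ Q mul e K hl hc hK :=
  gen_eqMixin (@subgroup_type Q mul e K hl hc hK).
HB.instance Definition _ Q mul e K hl hc hK :=
  gen_choiceMixin (@subgroup_type Q mul e K hl hc hK).

Section SubgroupZmodule.
Variables (Q : Type) (mul : Q -> Q -> Q) (e : Q) (K : Q -> Prop).
Hypotheses (hl : is_loop mul e) (hc : loop_commutative mul) (hK : is_subgroup mul e K).
Local Notation G := (subgroup_type hl hc hK).
Local Notation "x * y" := (mul x y).

(* membership in K is a Prop, so this needs proof irrelevance *)
Lemma subgroup_val_inj : injective (@sval Q K : G -> Q).
Proof. by move=> [a Ka] [b Kb] /= eab; subst b; rewrite (Prop_irrelevance Ka Kb). Qed.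

Lemma subgroup_inv_exists (a : G) : exists b : G, sval b * sval a = e.
Proof.
have [_ _ /(_ (sval a)) [d _ dK]] := hl; have [Ke _ _ Kdiv _] := hK.
by exists (exist _ (d e) (Kdiv _ _ _ (svalP a) Ke (dK e))); rewrite /= dK.
Qed.

Definition subgroup_add (a b : G) : G :=
  exist _ (sval a * sval b) (let: And5 _ Kmul _ _ _ := hK in Kmul _ _ (svalP a) (svalP b)).
Definition subgroup_zero : G := exist _ e (let: And5 Ke _ _ _ _ := hK in Ke).
Definition subgroup_opp (a : G) : G := sval (cid (subgroup_inv_exists a)).

Lemma subgroup_addA : associative subgroup_add.
Proof.
have [_ _ _ _ Kassoc] := hK.
by move=> a b d; apply: subgroup_val_inj; rewrite /= Kassoc //; apply: svalP.
Qed.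
Lemma subgroup_addC : commutative subgroup_add.
Proof. by move=> a b; apply: subgroup_val_inj; rewrite /= hc. Qed.
Lemma subgroup_add0 : left_id subgroup_zero subgroup_add.
Proof. by move=> a; apply: subgroup_val_inj; rewrite /= mul1q. Qed.
Lemma subgroup_addN : left_inverse subgroup_zero subgroup_opp subgroup_add.
Proof. by move=> a; apply: subgroup_val_inj; rewrite /subgroup_opp; case: cid. Qed.
End SubgroupZmodule.

HB.instance Definition _ Q mul e K hl hc hK :=
  GRing.isZmodule.Build (@subgroup_type Q mul e K hl hc hK)
    (@subgroup_addA Q mul e K hl hc hK) (@subgroup_addC Q mul e K hl hc hK)
    (@subgroup_add0 Q mul e K hl hc hK) (@subgroup_addN Q mul e K hl hc hK).

Section NuclearCosetModel.
Variables (Q : Type) (mul : Q -> Q -> Q) (e : Q) (K : Q -> Prop) (c : Q).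
Hypotheses (hl : is_loop mul e) (hc : loop_commutative mul) (hK : is_subgroup mul e K).
Hypotheses (Knuc : forall y, K y -> middle_nucleus mul y) (Kc : ~ K c)
  (Kdec : forall x, K x \/ exists2 h, K h & x = mul c h).
Local Notation G := (subgroup_type hl hc hK).
Local Notation "x * y" := (mul x y).

Lemma coset_notin u : K u -> ~ K (c * u).
Proof. by have [_ _ _ Kdiv _] := hK; move=> Ku /(Kdiv _ _ c Ku) /(_ erefl). Qed.

Lemma coset_square_in (z : G) : K (c * (c * sval z)).
Proof.
case: (Kdec (c * (c * sval z))) => // -[h Kh /(mulqI hl) czh].
by case: (coset_notin (svalP z)); rewrite czh.
Qed.

Definition coset_square (z : G) : G := exist _ _ (coset_square_in z).

Lemma coset_square_bij : bijective coset_square.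
Proof.
apply: inj_surj_bijective => [a b /(congr1 sval)/(mulqI hl)/(mulqI hl)|w].
  exact: subgroup_val_inj.
have [_ /(_ c) [d dK Kd] _] := hl.
case: (Kdec (d (sval w))) => [Kd'|[z Kz dwz]].
  by case: (coset_notin Kd'); rewrite Kd; apply: svalP.
by exists (exist _ z Kz); apply: subgroup_val_inj; rewrite /= -dwz Kd.
Qed.

Definition coset_embed (u : G + G) : Q :=
  match u with inl k => sval k | inr k => c * sval k end.

Lemma coset_embed_morph u v :
  coset_embed (Gf_mul coset_square u v) = coset_embed u * coset_embed v.
Proof.
case: u v => [[a Ka]|[a Ka]] [[b Kb]|[b Kb]] //=.
- by rewrite [RHS]hc (Knuc Kb) [b * a]hc.
- by rewrite (Knuc Ka).
- by rewrite [c * b]hc -(Knuc Kb) (Knuc Ka) [RHS]hc.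
Qed.

Lemma coset_embed_bij : bijective coset_embed.
Proof.
apply: inj_surj_bijective => [[a|a] [b|b] /=|q].
- by move=> ab; rewrite (subgroup_val_inj ab).
- by move=> ab; case: (coset_notin (svalP b)); rewrite -ab; apply: svalP.
- by move=> ab; case: (coset_notin (svalP a)); rewrite ab; apply: svalP.
- by move/(mulqI hl) => ab; rewrite (subgroup_val_inj ab).
case: (Kdec q) => [Kq|[h Kh ->]]; first by exists (inl (exist _ q Kq)).
by exists (inr (exist _ h Kh)).
Qed.

End NuclearCosetModel.

Lemma Gf_model (Q : Type) (mul : Q -> Q -> Q) (e : Q) (K : Q -> Prop) :
  is_loop mul e -> loop_commutative mul -> is_subgroup mul e K ->
  (forall y, K y -> middle_nucleus mul y) -> index2 mul K ->
  exists (G : zmodType) (f : G -> G), loop_iso mul (Gf_mul f) /\ bijective f.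
Proof.
move=> hl hc hK Knuc Kidx; have [c [Kc Kdec]] := index2_coset hK Kidx.
exists (subgroup_type hl hc hK), (coset_square (hl:=hl) (hc:=hc) Kc Kdec); split.
  apply: loop_iso_sym; exists (coset_embed c (hl:=hl) (hc:=hc) (hK:=hK)).
  by split; [apply: coset_embed_bij | apply: coset_embed_morph].
exact: coset_square_bij.
Qed.

Section Gf.
Variables (G : zmodType) (f : G -> G).
Local Notation "u * v" := (Gf_mul f u v).

Lemma Gf_middle y : middle_nucleus (Gf_mul f) (inl y).
Proof. by move=> [x|x] [z|z] /=; rewrite addrA. Qed.

Lemma Gf_nucleus_index : index_le2 (Gf_mul f) (middle_nucleus (Gf_mul f)).
Proof.
exists (inr 0) => -[x|x]; first by left; apply: Gf_middle.
by right; exists (inl x); [apply: Gf_middle | rewrite /= add0r].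
Qed.

Hypothesis finj : injective f.

Lemma Gf_cancel U V W : U * V = U * W -> V = W.
Proof. by case: U V W => u [v|v] [w|w] //= [] => [||| /finj] /addrI ->. Qed.

(* so L_{X,Y} is determined by its defining equation: it suffices to exhibit
   one automorphism satisfying it *)
Lemma left_inner_automorphic_Gf :
  (forall X Y, exists phi, (forall Z, (Y * X) * phi Z = Y * (X * Z)) /\
                       forall U V, phi (U * V) = phi U * phi V) ->
  left_inner_automorphic (Gf_mul f).
Proof.
move=> hphi X Y h hL U V; have [phi [phiL phiM]] := hphi X Y.
have E Z : h Z = phi Z by apply: (@Gf_cancel (Y * X)); rewrite hL phiL.
by rewrite !E phiM.
Qed.

End Gf.

Section GfConditions.
Variables (G : zmodType) (f : G -> G).
Hypotheses (fbij : bijective f) (hLA : left_inner_automorphic (Gf_mul f)).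

(* L_{\bar 0,\bar 0} acts on both copies of G as x |-> f x - f 0 *)
Let shift (Z : G + G) : G + G :=
  match Z with inl z => inl (f z - f 0) | inr z => inr (f z - f 0) end.

Let shift_L Z :
  Gf_mul f (Gf_mul f (inr 0) (inr 0)) (shift Z) = Gf_mul f (inr 0) (Gf_mul f (inr 0) Z).
Proof. by case: Z => z /=; rewrite !add0r addrC subrK. Qed.

(* L_{\bar 0,\bar 0} is additive on G: f is affine *)
Lemma Gf_affine x y : f (x + y) = f x + f y - f 0.
Proof.
have [E] := hLA shift_L (inl x) (inl y).
by apply: (addIr (- f 0)); rewrite E addrACA addrA.
Qed.

(* L_{\bar 0,\bar 0} respects \bar 0 * \bar 0 *)
Lemma Gf_fixes_f0 : f (f 0) = f 0 + f 0.
Proof.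
have [] := hLA shift_L (inr 0) (inr 0).
by rewrite addr0 subrr addr0 => /(canRL (subrK _)).
Qed.

(* L_{\bar 0,x} fixes G; applied to \bar 0 * \bar 0 it forces f (x + x) *)
Lemma Gf_squares x : f (x + x) = x + x + f 0.
Proof.
have [finv fK Kf] := fbij.
pose h (Z : G + G) := match Z with inl z => inl z | inr z => inr (finv (x + f z) - x) end.
have hL Z : Gf_mul f (Gf_mul f (inl x) (inr 0)) (h Z) = Gf_mul f (inl x) (Gf_mul f (inr 0) Z).
  case: Z => z /=; rewrite addr0 add0r //.
  by rewrite addrCA subrr addr0 Kf.
have [/(can_inj fK)] := hLA hL (inr 0) (inr 0).
set v := finv (x + f 0) => /esym; rewrite addr0 addrACA -opprD => /subr0_eq vv.
have fv : f v = x + f 0 by rewrite /v Kf.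
by rewrite -{1}vv Gf_affine fv addrA addrK addrAC.
Qed.

End GfConditions.

Section GfAutomorphic.
Variables (G : zmodType) (g : G -> G) (t : G).
Hypotheses (g_aut : additive_aut g) (g_squares : forall x, g (x + x) = x + x)
  (g_t : g t = t).
Let f x := g x + t.
Local Notation "u * v" := (Gf_mul f u v).

Let gD : {morph g : x y / x + y}. Proof. by case: g_aut. Qed.
Let g0 : g 0 = 0. Proof. by apply: (@addrI _ (g 0)); rewrite -gD !addr0. Qed.

(* y - g y has order at most 2, since g fixes y + y *)
Let defect_double y : (y - g y) + (y - g y) = 0.
Proof. by rewrite addrACA -opprD -gD g_squares subrr. Qed.

Let f_shift u v : f (u + v) = f u + g v.
Proof. by rewrite /f gD addrAC. Qed.

(* L_{X,Y} is the identity for X in G; for X, Y both in \bar G it is g on G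
   and g + (y - g y) on \bar G; for X in \bar G and Y = y in G it is a
   translation of \bar G by an element c of order <= 2 with g c = y - g y *)
Lemma left_inner_automorphic_affine : left_inner_automorphic (Gf_mul f).
Proof.
have [[ginv gK Kg] _] := g_aut.
have finj : injective f by move=> x y /addIr /(can_inj gK).
apply: (left_inner_automorphic_Gf finj) => -[x|x] [y|y].
- by exists id; split=> // Z; apply: Gf_middle.
- by exists id; split=> // Z; apply: Gf_middle.
- pose c := ginv (y - g y).
  have gc : g c = y - g y by rewrite Kg.
  have cc : c + c = 0 by apply: (can_inj gK); rewrite gD gc defect_double g0.
  exists (fun Z => if Z is inr z then inr (z + c) else Z); split.
    case=> z /=; first by rewrite addrA.
    by rewrite [y + x]addrC addrACA (f_shift (x + z)) gD gc [g y + _]addrC subrK addrC.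
  case=> a [] b //=.
  - by rewrite addrA.
  - by rewrite addrAC.
  - by rewrite addrACA cc addr0.
- exists (fun Z => match Z with inl z => inl (g z) | inr z => inr (g z + (y - g y)) end); split.
    case=> z /=; first by rewrite addrA (f_shift (y + x)).
    by rewrite [y + x]addrC !f_shift addrACA [g y + _]addrC subrK addrC.
  case=> a [] b /=; rewrite ?gD //.
  - by rewrite -addrA.
  - by rewrite addrAC.
  - by rewrite g_t addrACA defect_double addr0 /f gD.
Qed.
End GfAutomorphic.

(* (iii) => (iv): the linear part of f, with translation part f 0 *)
Lemma additive_aut_of_affine (G : zmodType) (f : G -> G) :
  bijective f ->
  (forall x y, f (x + y) = f x + f y - f 0) ->
  (forall x, f (x + x) = x + x + f 0) ->
  f (f 0) = f 0 + f 0 ->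
  [/\ additive_aut (fun x => f x - f 0),
      forall x, f (x + x) - f 0 = x + x & f (f 0) - f 0 = f 0].
Proof.
move=> [finv fK Kf] fD f2 f3; split; first split.
- by exists (fun x => finv (x + f 0)) => x; rewrite ?subrK ?fK ?Kf ?addrK.
- by move=> x y; rewrite fD -addrA addrACA.
- by move=> x; rewrite f2 addrK.
- by rewrite f3 addrK.
Qed.

Section AffineMaps.
Variables (G : zmodType) (f : G -> G).
Hypotheses (fD : forall x y, f (x + y) = f x + f y - f 0)
  (f2 : forall x, f (x + x) = x + x + f 0).

Lemma affine_double x : f x + f x = x + x + (f 0 + f 0).
Proof. by rewrite -[f x + f x](subrK (f 0)) -fD f2 addrA. Qed.

Lemma conditions_ii_of_iii : f (f 0) = f 0 + f 0 ->
  forall x, (f (f x) + f (f x)) - (f x + f x) = f (f 0).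
Proof. by move=> f3 x; rewrite affine_double [_ + (_ + _)]addrC addrK f3. Qed.

End AffineMaps.

Lemma condition_iii_of_ii (G : zmodType) (f : G -> G) :
  (forall x, (f (f x) + f (f x)) - (f x + f x) = f (f 0)) -> f (f 0) = f 0 + f 0.
Proof. by move=> /(_ 0); rewrite -addrA -[X in _ = X]addr0 => /addrI/subr0_eq. Qed.

Lemma A_loop_of_affine_model (Q : Type) (mul : Q -> Q -> Q) (e : Q)
    (G : zmodType) (g : G -> G) (t : G) :
  is_loop mul e -> loop_commutative mul ->
  loop_iso mul (Gf_mul (fun x => g x + t)) -> additive_aut g ->
  (forall x, g (x + x) = x + x) -> g t = t ->
  A_loop mul /\ index_le2 mul (middle_nucleus mul).
Proof.
move=> hl hc iso g_aut g2 gt; split; last exact: nucleus_index_iso iso (Gf_nucleus_index _).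
apply/(A_loopP hl hc)/(left_inner_automorphic_iso iso).
exact: left_inner_automorphic_affine.
Qed.

Lemma affine_model_of_A_loop (Q : Type) (mul : Q -> Q -> Q) (e : Q) :
  is_loop mul e -> loop_commutative mul ->
  (exists H, is_subgroup mul e H /\ index2 mul H) ->
  A_loop mul -> index_le2 mul (middle_nucleus mul) ->
  exists (G : zmodType) (f : G -> G),
    [/\ loop_iso mul (Gf_mul f), bijective f,
        forall x y, f (x + y) = f x + f y - f 0,
        forall x, f (x + x) = x + x + f 0 &
        f (f 0) = f 0 + f 0].
Proof.
move=> hl hc hH hA Nidx.
have [K [Ksub Knuc Kidx]] := nuclear_subgroup_index2 hl hc hH Nidx.
have [G [f [iso fbij]]] := Gf_model hl hc Ksub Knuc Kidx.
have hLA := left_inner_automorphic_iso (loop_iso_sym iso) ((A_loopP hl hc).1 hA).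
exists G, f; split=> //; [exact: Gf_affine | exact: Gf_squares | exact: Gf_fixes_f0].
Qed.

Theorem proposition2p7 (Q : Type) (mul : Q -> Q -> Q) (e : Q) :
  is_loop mul e -> loop_commutative mul ->
  (exists H : Q -> Prop, is_subgroup mul e H /\ index2 mul H) ->
  [<-> (* (i) *)
       A_loop mul /\ index_le2 mul (middle_nucleus mul);
       (* (ii) *)
       exists (G : zmodType) (f : G -> G),
         [/\ loop_iso mul (Gf_mul f), bijective f,
             forall x y, f (x + y) = f x + f y - f 0,
             forall x, f (x + x) = x + x + f 0 &
             forall x, (f (f x) + f (f x)) - (f x + f x) = f (f 0)];
       (* (iii) *)
       exists (G : zmodType) (f : G -> G),
         [/\ loop_iso mul (Gf_mul f), bijective f,
             forall x y, f (x + y) = f x + f y - f 0,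
             forall x, f (x + x) = x + x + f 0 &
             f (f 0) = f 0 + f 0];
       (* (iv) *)
       exists (G : zmodType) (g : G -> G) (t : G),
         [/\ loop_iso mul (Gf_mul (fun x => g x + t)), additive_aut g,
             forall x, g (x + x) = x + x & g t = t]].
Proof.
move=> hl hc hH.
tfae=> [[hA Nidx]|[G [f [iso fb fD f2 f4]]]|[G [f [iso fb fD f2 f3]]]|[G [g [t [iso g_aut g2 gt]]]]].
- have [G [f [iso fb fD f2 f3]]] := affine_model_of_A_loop hl hc hH hA Nidx.
  by exists G, f; split=> //; apply: conditions_ii_of_iii.
- by exists G, f; split=> //; apply: condition_iii_of_ii.
- have [g_aut g2 gt] := additive_aut_of_affine fb fD f2 f3.
  exists G, (fun x => f x - f 0), (f 0); split=> //.
  by have -> : (fun x => f x - f 0 + f 0) = f by apply/funext=> x; rewrite subrK.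
- exact: A_loop_of_affine_model hl hc iso g_aut g2 gt.
Qed.
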